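(* Let $a<b$ and let $f:[a,b]\rightarrow\mathbb{R}$ be a differentiable mapping in $(a,b)$ such that $f'\in L^1[a,b]$ and $\gamma\le f'(x)\le \Gamma$ for all $x\in [a,b]$, where $\gamma,\Gamma$ are real constants. Assume additionally that $f(a+b-x)=f(x)$ for all $x\in[a,b]$. Put $S=\frac{f(b)-f(a)}{b-a}$. Then for all $x\in[a,\frac{a+b}{2}]$, \[ \left|f(x)-\frac{1}{b-a}\int_{a}^{b}f(t)\,dt\right|\leq \left[\frac{b-a}{4}+\left|x-\frac{3a+b}{4}\right|\right] (S-\gamma) \] and \[ \left|f(x)-\frac{1}{b-a}\int_{a}^{b}f(t)\,dt\right|\leq \left[\frac{b-a}{4}+\left|x-\frac{3a+b}{4}\right|\right] (\Gamma-S). \] *)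

From HB Require Import structures.
From mathcomp Require Import all_boot all_order all_algebra.
From mathcomp Require Import all_classical all_reals all_analysis.
Set Implicit Arguments. Unset Strict Implicit. Unset Printing Implicit Defensive.
Import Order.TTheory GRing.Theory Num.Theory.
Import numFieldNormedType.Exports.

(* By symmetry f b = f a, so S = 0, and it suffices to bound the oscillation of
   f around the mean value.  The mean value theorem gives the one-sided
   increment bounds gamma (v - u) <= f v - f u <= Gamma (v - u); the reflection
   t |-> a + b - t swaps the two sides, so a symmetric f is Gamma-Lipschitz and
   (-gamma)-Lipschitz.  Every t in [a, b] reflects to a point of [a, (a+b)/2],
   whose distance to x is at most max (x - a, (a+b)/2 - x)
   = (b - a)/4 + |x - (3a+b)/4|.  Averaging the resulting pointwise bound over
   [a, b] gives the result. *)
From HB Require Import structures.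
From mathcomp Require Import all_boot all_order all_algebra.
From mathcomp Require Import all_classical all_reals all_analysis.
From mathcomp Require Import ring lra.

Set Implicit Arguments.
Unset Strict Implicit.
Unset Printing Implicit Defensive.

Import Order.TTheory GRing.Theory Num.Theory.
Import numFieldNormedType.Exports.
Local Open Scope classical_set_scope.
Local Open Scope ring_scope.

Section SymmetricOscillation.
Variables (R : realType) (a b : R).

Lemma derive1_increment_bounds (gamma Gamma : R) (f : R -> R) :
  {within `[a, b], continuous f} ->
  (forall x, x \in `]a, b[ -> derivable f x 1) ->
  (forall x, x \in `]a, b[ -> gamma <= derive1 f x <= Gamma) ->
  forall u v, a <= u -> u <= v -> v <= b ->
  gamma * (v - u) <= f v - f u <= Gamma * (v - u).
Proof.
move=> fc fd fb u v au uv vb.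
have [->|uv'] := eqVneq u v; first by rewrite !subrr !mulr0 lexx.
have ltuv : u < v by rewrite lt_neqAle uv' uv.
have sub_ab z : z \in `]u, v[ -> z \in `]a, b[.
  rewrite !in_itv /= => /andP[uz zv].
  by rewrite (le_lt_trans au uz) (lt_le_trans zv vb).
have df z : z \in `]u, v[ -> is_derive z 1 f (derive1 f z).
  by move=> /sub_ab /fd dz; rewrite derive1E; exact: derivableP.
have fc_uv : {within `[u, v], continuous f}.
  apply: continuous_subspaceW fc => z /=; rewrite !in_itv /= => /andP[uz zv].
  by rewrite (le_trans au uz) (le_trans zv vb).
have [c cuv ->] := MVT ltuv df fc_uv.
have /fb/andP[gc cG] := sub_ab c cuv.
by rewrite !ler_wpM2r // subr_ge0.
Qed.

Definition symmetric_on (f : R -> R) :=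
  forall x, x \in `[a, b] -> f (a + b - x) = f x.

Lemma symmetric_onN (f : R -> R) :
  symmetric_on f -> symmetric_on (fun x => - f x).
Proof. by move=> sym x /sym ->. Qed.

Lemma symmetric_lipschitz (C : R) (f : R -> R) : symmetric_on f ->
  (forall u v, a <= u -> u <= v -> v <= b -> f v - f u <= C * (v - u)) ->
  forall u v, a <= u <= b -> a <= v <= b -> `|f v - f u| <= C * `|v - u|.
Proof.
move=> sym incr u v.
wlog uv : u v / u <= v.
  move=> hwlog hu hv; have [uv|vu] := leP u v; first exact: hwlog.
  by rewrite distrC (distrC v); exact: hwlog (ltW vu) hv hu.
move=> /andP[au ub] /andP[av vb].
have reflect_incr : f u - f v <= C * (v - u).
  have -> : v - u = (a + b - u) - (a + b - v) by ring.
  rewrite -(sym u) ?in_itv /= ?au ?ub // -(sym v) ?in_itv /= ?av ?vb //.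
  by apply: incr; lra.
rewrite (ger0_norm (_ : 0 <= v - u)) ?subr_ge0 // ler_norml.
by rewrite (incr u v) // andbT; lra.
Qed.

Lemma symmetric_oscillation (C : R) (f : R -> R) : a < b -> symmetric_on f ->
  (forall u v, a <= u <= b -> a <= v <= b -> `|f v - f u| <= C * `|v - u|) ->
  forall x t, a <= x <= (a + b) / 2 -> a <= t <= b ->
  `|f x - f t| <= ((b - a) / 4 + `|x - (3 * a + b) / 4|) * C.
Proof.
move=> ab sym lipf x t /andP[ax xm] /andP[a_t t_b].
have C0 : 0 <= C.
  have ab_ab : a <= a <= b /\ a <= b <= b by rewrite !lexx ltW.
  have := le_trans (normr_ge0 _) (lipf a b ab_ab.1 ab_ab.2).
  by rewrite pmulr_lge0 // normr_gt0 subr_eq0 gt_eqF.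
have dist_half s : a <= s <= (a + b) / 2 -> `|f x - f s| <= C * `|x - s| ->
    `|f x - f s| <= ((b - a) / 4 + `|x - (3 * a + b) / 4|) * C.
  move=> /andP[a_s s_m] /le_trans; rewrite mulrC; apply; apply: (ler_wpM2r C0).
  have d1 := ler_norm (x - (3 * a + b) / 4).
  have d2 := ler_norm (- (x - (3 * a + b) / 4)); rewrite normrN in d2.
  by rewrite ler_norml; apply/andP; split; lra.
have x_ab : a <= x <= b by rewrite ax /=; lra.
have [tm|mt] := leP t ((a + b) / 2).
  by apply: dist_half; rewrite ?a_t //; apply: lipf; rewrite ?a_t.
rewrite -(sym t) ?in_itv /= ?a_t //.
have s_half : a <= a + b - t <= (a + b) / 2 by apply/andP; split; lra.
by apply: dist_half => //; apply: lipf => //; apply/andP; split; lra.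
Qed.

End SymmetricOscillation.

Lemma dist_Rintegral_mean_le (R : realType) (a b y M : R) (f : R -> R) :
  a < b -> {within `[a, b], continuous f} ->
  (forall t, a <= t <= b -> `|y - f t| <= M) ->
  `|y - (b - a)^-1 * \int[@lebesgue_measure R]_(t in `[a, b]) f t| <= M.
Proof.
move=> ab fc yfM.
have mab : measurable (`[a, b] : set R) by exact: measurable_itv.
have fint : (@lebesgue_measure R).-integrable `[a, b] (EFin \o f).
  by apply: continuous_compact_integrable; [exact: segment_compact | exact: fc].
have cint (c : R) : (@lebesgue_measure R).-integrable `[a, b] (EFin \o (fun=> c)).
  apply: continuous_compact_integrable; first exact: segment_compact.
  by apply: continuous_subspaceT => z; exact: cst_continuous.
have len_ab : fine (@lebesgue_measure R `[a, b]) = b - a.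
  by rewrite lebesgue_measure_itv /= lte_fin ab -EFinD.
set I := \int[@lebesgue_measure R]_(t in `[a, b]) f t.
have lo : \int[@lebesgue_measure R]_(t in `[a, b]) (y - M) <= I.
  apply: le_Rintegral => // t; rewrite /= in_itv => /yfM.
  by rewrite ler_norml => /andP[? ?]; lra.
have hi : I <= \int[@lebesgue_measure R]_(t in `[a, b]) (y + M).
  apply: le_Rintegral => // t; rewrite /= in_itv => /yfM.
  by rewrite ler_norml => /andP[? ?]; lra.
rewrite !Rintegral_cst // len_ab in lo hi.
have ba : 0 < b - a by rewrite subr_gt0.
have eI : I = ((b - a)^-1 * I) * (b - a) by field; rewrite gt_eqF.
rewrite eI !ler_pM2r // in lo hi.
by rewrite ler_norml; apply/andP; split; lra.
Qed.

Theorem corollary2p4 (R : realType) (a b gamma Gamma : R) (f : R -> R) :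
  a < b ->
  {within `[a, b], continuous f} ->
  (forall x, x \in `]a, b[ -> derivable f x 1) ->
  (@lebesgue_measure R).-integrable `[a, b]
    (EFin \o (derive1 f)) ->
  (forall x, x \in `]a, b[ -> gamma <= derive1 f x <= Gamma) ->
  (forall x, x \in `[a, b] -> f (a + b - x) = f x) ->
  let S := (f b - f a) / (b - a) in
  forall x, x \in `[a, (a + b) / 2] ->
    `| f x - (b - a)^-1 * \int[@lebesgue_measure R]_(t in `[a, b]) f t |
      <= ((b - a) / 4 + `| x - (3 * a + b) / 4 |) * (S - gamma)
    /\
    `| f x - (b - a)^-1 * \int[@lebesgue_measure R]_(t in `[a, b]) f t |
      <= ((b - a) / 4 + `| x - (3 * a + b) / 4 |) * (Gamma - S).
Proof.
move=> ab fc fd _ f'_bnd sym S x; rewrite in_itv /= => x_half.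
have -> : S = 0.
  have := sym a; rewrite in_itv /= lexx ltW // addrC addKr => /(_ isT) fba.
  by rewrite /S fba subrr mul0r.
have incr_le u v : a <= u -> u <= v -> v <= b -> f v - f u <= Gamma * (v - u).
  by move=> au uv vb; case/andP: (derive1_increment_bounds fc fd f'_bnd au uv vb).
have decrN_le u v : a <= u -> u <= v -> v <= b ->
    - f v - - f u <= - gamma * (v - u).
  move=> au uv vb; case/andP: (derive1_increment_bounds fc fd f'_bnd au uv vb).
  by move=> ? _; lra.
rewrite sub0r subr0; split; apply: dist_Rintegral_mean_le => // t t_ab.
  have -> : f x - f t = - (- f x - - f t) by ring.
  rewrite normrN.
  apply: (symmetric_oscillation ab (symmetric_onN sym) _ x_half t_ab).
  exact: symmetric_lipschitz (symmetric_onN sym) decrN_le.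
apply: (symmetric_oscillation ab sym _ x_half t_ab).
exact: symmetric_lipschitz sym incr_le.
Qed.
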